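(* Let $G\in L^\infty_{q\times p}$ be such that its Hankel operator $H$ satisfies (C1) $H$ has finite rank, and (C2) no maximizing vector of $H$ belongs to $SH^2_p$ and the linear span of the maximizing vectors of $H$ has dimension $p$. Let $\mathcal M_0$ be a finite dimensional subspace of $H^2_p$ with $S^*\mathcal M_0\subset\mathcal M_0$, let $P_0$ be the orthogonal projection onto $\mathcal M_0$, and put $\mathcal X_0=W\mathcal M_0^\perp\subset\mathcal X$. Then $\mathcal X_0$ is $Z$-invariant and, with $Z_0=Z|_{\mathcal X_0}:\mathcal X_0\to\mathcal X_0$, $\Pi_{\mathcal X_0}:\mathcal X\to\mathcal X_0$ the orthogonal projection, and $W_0=\Pi_{\mathcal X_0}W:H^2_p\to\mathcal X_0$, we have $r_{\mathrm{spec}}(Z_0)\le r_{\mathrm{spec}}(Z)$ and $Z^kW(I-P_0)=\Pi_{\mathcal X_0}^*Z_0^kW_0(I-P_0)$ for $k=0,1,2,\dots$.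
   Context: $H:H^2_p\to K^2_q$, $Hf=P_-(Gf)$, with $P_-$ the orthogonal projection of $L^2_q$ onto $K^2_q=L^2_q\ominus H^2_q$; $S$ forward shift on $H^2_p$; $V$ multiplication by $e^{it}$ on $L^2_q$, $V_-=P_-V|_{K^2_q}$; $\mathcal X=\overline{\operatorname{Im}H}=\operatorname{Im}H$; $Z=V_-|_{\mathcal X}:\mathcal X\to\mathcal X$; $W:H^2_p\to\mathcal X$, $Wf=Hf$. $\Pi_{\mathcal X_0}^*$ is the inclusion of $\mathcal X_0$ into $\mathcal X$. A maximizing vector of $H$ is a nonzero $h$ with $\|Hh\|=\|H\|\,\|h\|$. *)

(* Hilbert spaces are modelled on the Fourier side (Plancherel):
   an element of L^2_d (C^d-valued functions on the unit circle) is the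
   sequence of its Fourier coefficients  f : Z -> nat -> C,
   f n j = j-th coordinate of the n-th Fourier coefficient (j < d). *)
From Stdlib Require Import Reals ZArith.
From Coquelicot Require Import Coquelicot.
Open Scope R_scope.

Definition seqv := Z -> nat -> C.

Fixpoint fsumR (d : nat) (a : nat -> R) : R :=
  match d with O => 0 | S d' => fsumR d' a + a d' end.
Fixpoint fsumC (d : nat) (a : nat -> C) : C :=
  match d with O => RtoC 0 | S d' => Cplus (fsumC d' a) (a d') end.

Definition zterm (a : Z -> C) (k : nat) : C :=
  Cplus (a (Z.of_nat k)) (a (- Z.of_nat k - 1)%Z).
Definition zsummable (a : Z -> C) : Prop :=
  ex_series (fun k => Re (zterm a k)) /\ ex_series (fun k => Im (zterm a k)).
Definition zsum (a : Z -> C) : C :=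
  (Series (fun k => Re (zterm a k)), Series (fun k => Im (zterm a k))).

Definition vzero : seqv := fun _ _ => RtoC 0.
Definition vadd (f g : seqv) : seqv := fun n j => Cplus (f n j) (g n j).
Definition vscal (c : C) (f : seqv) : seqv := fun n j => Cmult c (f n j).
Definition vsub (f g : seqv) : seqv := fun n j => Cminus (f n j) (g n j).

Fixpoint lincomb (m : nat) (c : nat -> C) (b : nat -> seqv) : seqv :=
  match m with O => vzero | S m' => vadd (lincomb m' c b) (vscal (c m') (b m')) end.

Definition sqn (d : nat) (f : seqv) (n : Z) : R :=
  fsumR d (fun j => (Cmod (f n j)) ^ 2).
Definition L2 (d : nat) (f : seqv) : Prop :=
  (forall n j, (d <= j)%nat -> f n j = RtoC 0) /\
  ex_series (fun k => sqn d f (Z.of_nat k) + sqn d f (- Z.of_nat k - 1)%Z).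
Definition vnorm (d : nat) (f : seqv) : R :=
  sqrt (Series (fun k => sqn d f (Z.of_nat k) + sqn d f (- Z.of_nat k - 1)%Z)).
Definition ip (d : nat) (f g : seqv) : C :=
  zsum (fun n => fsumC d (fun j => Cmult (f n j) (Cconj (g n j)))).

Definition H2 (d : nat) (f : seqv) : Prop := L2 d f /\ forall n j, (n < 0)%Z -> f n j = RtoC 0.
Definition K2 (d : nat) (f : seqv) : Prop := L2 d f /\ forall n j, (0 <= n)%Z -> f n j = RtoC 0.

Definition Pm (f : seqv) : seqv := fun n j => if Z.ltb n 0 then f n j else RtoC 0.
(* multiplication by e^{it}: shifts Fourier coefficients *)
Definition Vmul (f : seqv) : seqv := fun n j => f (n - 1)%Z j.
Definition Vm (f : seqv) : seqv := Pm (Vmul f).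
Definition Sh (f : seqv) : seqv := Vmul f.
Definition Sadj (f : seqv) : seqv := fun n j => if Z.ltb n 0 then RtoC 0 else f (n + 1)%Z j.

(* A matrix symbol G in L^infty_{q x p}, given by its Fourier coefficients
   g m i j (i < q, j < p).  Multiplication by G is the Laurent operator
   (Gf)_m = sum_n g(m-n) f_n. *)
Definition msym := Z -> nat -> nat -> C.
Definition Gterm (p : nat) (g : msym) (f : seqv) (m : Z) (i : nat) : Z -> C :=
  fun n => fsumC p (fun j => Cmult (g (m - n)%Z i j) (f n j)).
Definition Gmul (p : nat) (g : msym) (f : seqv) : seqv :=
  fun m i => zsum (Gterm p g f m i).
(* G in L^infty_{q x p}  <=>  its Laurent operator is bounded L^2_p -> L^2_q *)
Definition Linf (q p : nat) (g : msym) : Prop :=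
  (forall m i j, ((q <= i)%nat \/ (p <= j)%nat) -> g m i j = RtoC 0) /\
  exists M : R, forall f, L2 p f ->
    (forall m i, zsummable (Gterm p g f m i)) /\
    L2 q (Gmul p g f) /\ vnorm q (Gmul p g f) <= M * vnorm p f.

Definition Hank (p : nat) (g : msym) (f : seqv) : seqv := Pm (Gmul p g f).

Definition Hnorm (q p : nat) (g : msym) : R :=
  real (Lub_Rbar (fun r => exists f, H2 p f /\ vnorm p f <= 1 /\ r = vnorm q (Hank p g f))).

Definition maximizing (q p : nat) (g : msym) (h : seqv) : Prop :=
  H2 p h /\ h <> vzero /\ vnorm q (Hank p g h) = Hnorm q p g * vnorm p h.

Definition span (A : seqv -> Prop) (x : seqv) : Prop :=
  exists m c b, (forall k, (k < m)%nat -> A (b k)) /\ x = lincomb m c b.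

Definition lin_indep (m : nat) (b : nat -> seqv) : Prop :=
  forall c, lincomb m c b = vzero -> forall k, (k < m)%nat -> c k = RtoC 0.

Definition span_dim (A : seqv -> Prop) (m : nat) : Prop :=
  exists b, (forall k, (k < m)%nat -> span A (b k)) /\ lin_indep m b /\
    forall x, span A x -> exists c, x = lincomb m c b.

Definition finite_rank (p : nat) (g : msym) : Prop :=
  exists m b, forall f, H2 p f -> exists c, Hank p g f = lincomb m c b.

Definition fin_dim_subspace (p : nat) (M : seqv -> Prop) : Prop :=
  exists m b, (forall k, (k < m)%nat -> H2 p (b k)) /\
    forall x, M x <-> exists c, x = lincomb m c b.

Definition is_orth_proj (d : nat) (U M : seqv -> Prop) (P : seqv -> seqv) : Prop :=
  forall f, U f -> M (P f) /\ forall h, M h -> ip d (vsub f (P f)) h = RtoC 0.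

Definition resolvent (d : nat) (Y : seqv -> Prop) (T : seqv -> seqv) (l : C) : Prop :=
  exists Rl : seqv -> seqv,
    (forall y, Y y -> Y (Rl y) /\ vsub (T (Rl y)) (vscal l (Rl y)) = y) /\
    (forall x, Y x -> Rl (vsub (T x) (vscal l x)) = x) /\
    exists M : R, forall y, Y y -> vnorm d (Rl y) <= M * vnorm d y.
Definition rspec (d : nat) (Y : seqv -> Prop) (T : seqv -> seqv) : Rbar :=
  Lub_Rbar (fun r => exists l, ~ resolvent d Y T l /\ r = Cmod l).

(* Since [H S = V_- H], the S^*-invariance of M0 makes S preserve M0^perp, so
   Z = V_- maps X0 = H M0^perp into itself.  X0 lies in the finite-dimensional
   range of H.  If [Z - l] is invertible on X it is injective on X0, and an
   injective linear endomorphism of a finite-dimensional space is onto, so its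
   inverse maps X0 into itself: the spectrum of Z0 is contained in that of Z.
   Finally W (I - P0) takes values in X0, on which Pi is the identity. *)

From Stdlib Require Import Reals ZArith Lia Lra List.
From Stdlib Require Import FunctionalExtensionality Classical IndefiniteDescription.
From Coquelicot Require Import Coquelicot.
Open Scope R_scope.

Lemma fsumC_ext d a b : (forall j, (j < d)%nat -> a j = b j) -> fsumC d a = fsumC d b.
Proof.
  induction d as [|d IH]; intros Hab; simpl; auto.
  rewrite IH by (intros; apply Hab; lia). rewrite Hab by lia. reflexivity.
Qed.

Lemma fsumC_zero d a : (forall j, (j < d)%nat -> a j = RtoC 0) -> fsumC d a = RtoC 0.
Proof.
  intros Ha. rewrite (fsumC_ext d a (fun _ => RtoC 0)) by auto. clear Ha.
  induction d as [|d IH]; simpl; auto. rewrite IH. ring.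
Qed.

Lemma fsumC_plus d a b : fsumC d (fun j => Cplus (a j) (b j)) = Cplus (fsumC d a) (fsumC d b).
Proof. induction d as [|d IH]; simpl. ring. rewrite IH. ring. Qed.

Lemma fsumC_scal d a u : fsumC d (fun j => Cmult u (a j)) = Cmult u (fsumC d a).
Proof. induction d as [|d IH]; simpl. ring. rewrite IH. ring. Qed.

Lemma fsumC_lin d a b u v : fsumC d (fun j => Cplus (Cmult u (a j)) (Cmult v (b j))) =
  Cplus (Cmult u (fsumC d a)) (Cmult v (fsumC d b)).
Proof. rewrite fsumC_plus, !fsumC_scal. reflexivity. Qed.

Lemma fsumC_swap n m (A : nat -> nat -> C) :
  fsumC n (fun i => fsumC m (A i)) = fsumC m (fun k => fsumC n (fun i => A i k)).
Proof.
  induction n as [|n IH]; simpl.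
  - symmetry; apply fsumC_zero; auto.
  - rewrite IH, <- fsumC_plus. reflexivity.
Qed.

Lemma fsumC_first n a : fsumC (S n) a = Cplus (a 0%nat) (fsumC n (fun i => a (S i))).
Proof.
  induction n as [|n IH]; [simpl; ring|].
  change (Cplus (fsumC (S n) a) (a (S n)) =
          Cplus (a 0%nat) (Cplus (fsumC n (fun i => a (S i))) (a (S n)))).
  rewrite IH. ring.
Qed.

Lemma fsumR_ext d a b : (forall j, (j < d)%nat -> a j = b j) -> fsumR d a = fsumR d b.
Proof.
  induction d as [|d IH]; intros Hab; simpl; auto.
  rewrite IH by (intros; apply Hab; lia). rewrite Hab by lia. reflexivity.
Qed.

Lemma fsumR_le d a b : (forall j, (j < d)%nat -> a j <= b j) -> fsumR d a <= fsumR d b.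
Proof.
  induction d as [|d IH]; intros Hab; simpl; [lra|].
  apply Rplus_le_compat; [apply IH; intros|]; apply Hab; lia.
Qed.

Lemma fsumR_plus d a b : fsumR d (fun j => a j + b j) = fsumR d a + fsumR d b.
Proof. induction d as [|d IH]; simpl. lra. rewrite IH. lra. Qed.

Lemma fsumR_scal d a u : fsumR d (fun j => u * a j) = u * fsumR d a.
Proof. induction d as [|d IH]; simpl. lra. rewrite IH. lra. Qed.

Lemma fsumR_const0 d : fsumR d (fun _ => 0) = 0.
Proof. induction d as [|d IH]; simpl; auto. rewrite IH; ring. Qed.

Lemma fsumR_ge0 d a : (forall j, (j < d)%nat -> 0 <= a j) -> 0 <= fsumR d a.
Proof. intros Ha. rewrite <- (fsumR_const0 d). apply fsumR_le; auto. Qed.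

Lemma fsumR_abs d a : Rabs (fsumR d a) <= fsumR d (fun j => Rabs (a j)).
Proof.
  induction d as [|d IH]; simpl; [rewrite Rabs_R0; lra|].
  eapply Rle_trans; [apply Rabs_triang|lra].
Qed.

Lemma fsumR_eq0 d a : (forall j, (j < d)%nat -> 0 <= a j) -> fsumR d a = 0 ->
  forall j, (j < d)%nat -> a j = 0.
Proof.
  induction d as [|d IH]; simpl; intros Ha H0 j Hj; [lia|].
  assert (0 <= fsumR d a) by (apply fsumR_ge0; intros; apply Ha; lia).
  assert (0 <= a d) by (apply Ha; lia).
  destruct (Nat.eq_dec j d) as [->|]; [lra|].
  apply IH; [intros; apply Ha; lia | lra | lia].
Qed.

Lemma Re_fsumC d a : Re (fsumC d a) = fsumR d (fun j => Re (a j)).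
Proof. induction d as [|d IH]; simpl; auto. rewrite <- IH. reflexivity. Qed.

Lemma Im_fsumC d a : Im (fsumC d a) = fsumR d (fun j => Im (a j)).
Proof. induction d as [|d IH]; simpl; auto. rewrite <- IH. reflexivity. Qed.

Definition vlin (a : C) (f : seqv) (b : C) (g : seqv) : seqv :=
  fun n j => Cplus (Cmult a (f n j)) (Cmult b (g n j)).

Definition subspace (Y : seqv -> Prop) : Prop :=
  Y vzero /\ forall a b f g, Y f -> Y g -> Y (vlin a f b g).

Lemma vadd_vlin f g : vadd f g = vlin (RtoC 1) f (RtoC 1) g.
Proof. extensionality n; extensionality j. unfold vadd, vlin. ring. Qed.

Lemma vscal_vlin c f : vscal c f = vlin c f (RtoC 0) f.
Proof. extensionality n; extensionality j. unfold vscal, vlin. ring. Qed.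

Lemma vsub_vlin f g : vsub f g = vlin (RtoC 1) f (RtoC (-1)) g.
Proof. extensionality n; extensionality j. unfold vsub, vlin. ring. Qed.

Lemma vsub_eq0 (f g : seqv) : vsub f g = vzero -> f = g.
Proof.
  intros H. extensionality n; extensionality j.
  apply (f_equal (fun v => v n j)) in H. unfold vsub, vzero in H.
  replace (f n j) with (Cplus (Cminus (f n j) (g n j)) (g n j)) by ring.
  rewrite H. ring.
Qed.

Lemma lincombE m c b n j : lincomb m c b n j = fsumC m (fun k => Cmult (c k) (b k n j)).
Proof. induction m as [|m IH]; simpl; auto. unfold vadd, vscal. rewrite IH. reflexivity. Qed.

Lemma lincomb_first n c b : lincomb (S n) c b =
  vadd (vscal (c 0%nat) (b 0%nat)) (lincomb n (fun i => c (S i)) (fun i => b (S i))).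
Proof.
  extensionality x; extensionality j. unfold vadd, vscal. rewrite !lincombE.
  apply fsumC_first.
Qed.

Lemma subspace_lincomb Y m c b : subspace Y -> (forall k, (k < m)%nat -> Y (b k)) ->
  Y (lincomb m c b).
Proof.
  intros [Y0 Ylin] Hb. induction m as [|m IH]; simpl; auto.
  rewrite vadd_vlin, vscal_vlin. apply Ylin; [apply IH; intros; apply Hb; lia|].
  apply Ylin; apply Hb; lia.
Qed.

Lemma ex_series_const0 : ex_series (fun _ : nat => 0).
Proof.
  apply ex_series_Reals_1. exists 0. intros e He. exists 0%nat. intros.
  rewrite sum_cte. unfold R_dist. rewrite Rmult_0_l, Rminus_0_r, Rabs_R0. exact He.
Qed.

Lemma Series_const0 : Series (fun _ => 0) = 0.
Proof.
  rewrite (Series_ext _ (fun n => 0 * (fun _ => 0) n)) by (intros; ring).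
  rewrite Series_scal_l. ring.
Qed.

Lemma ex_series_ge0_le u v : (forall k, 0 <= u k <= v k) -> ex_series v -> ex_series u.
Proof.
  intros Huv. apply (ex_series_le u v). intros k.
  change (norm (u k)) with (Rabs (u k)). rewrite Rabs_pos_eq; apply Huv.
Qed.

Lemma Series_lin2 a b u v : ex_series u -> ex_series v ->
  ex_series (fun k => a * u k + b * v k) /\
  Series (fun k => a * u k + b * v k) = a * Series u + b * Series v.
Proof.
  intros Hu Hv. assert (Ha := ex_series_scal_l a u Hu). assert (Hb := ex_series_scal_l b v Hv).
  split; [apply (ex_series_plus _ _ Ha Hb)|].
  rewrite Series_plus by assumption. rewrite !Series_scal_l. reflexivity.
Qed.

Lemma Series_ge0_eq0 u : ex_series u -> (forall k, 0 <= u k) -> Series u = 0 ->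
  forall k, u k = 0.
Proof.
  intros Hu Hpos H0 k. rewrite (Series_incr_n u (S k)) in H0 by (auto; lia). simpl pred in H0.
  assert (0 <= Series (fun i => u (S k + i)%nat)).
  { rewrite <- Series_const0. apply Series_le; [intros; split; auto; lra|].
    apply (ex_series_incr_n u (S k)); assumption. }
  assert (u k <= sum_f_R0 u k).
  { destruct k as [|k]; simpl; [lra|]. pose proof (cond_pos_sum u k Hpos). lra. }
  pose proof (Hpos k). lra.
Qed.

Lemma zsum_plus x y : zsummable x -> zsummable y ->
  zsummable (fun n => Cplus (x n) (y n)) /\
  zsum (fun n => Cplus (x n) (y n)) = Cplus (zsum x) (zsum y).
Proof.
  intros [Xr Xi] [Yr Yi].
  assert (Er : forall k, Re (zterm (fun n => Cplus (x n) (y n)) k) =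
                         1 * Re (zterm x k) + 1 * Re (zterm y k))
    by (intros; unfold zterm; simpl; ring).
  assert (Ei : forall k, Im (zterm (fun n => Cplus (x n) (y n)) k) =
                         1 * Im (zterm x k) + 1 * Im (zterm y k))
    by (intros; unfold zterm; simpl; ring).
  destruct (Series_lin2 1 1 _ _ Xr Yr) as [Er' Sr].
  destruct (Series_lin2 1 1 _ _ Xi Yi) as [Ei' Si].
  split; [split|].
  - eapply ex_series_ext; [intros; symmetry; apply Er | exact Er'].
  - eapply ex_series_ext; [intros; symmetry; apply Ei | exact Ei'].
  - unfold zsum. rewrite (Series_ext _ _ Er), (Series_ext _ _ Ei), Sr, Si.
    unfold Cplus; simpl. f_equal; ring.
Qed.

Lemma zsum_scal a x : zsummable x ->
  zsummable (fun n => Cmult a (x n)) /\ zsum (fun n => Cmult a (x n)) = Cmult a (zsum x).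
Proof.
  intros [Xr Xi].
  assert (Er : forall k, Re (zterm (fun n => Cmult a (x n)) k) =
                         fst a * Re (zterm x k) + (- snd a) * Im (zterm x k))
    by (intros; unfold zterm; simpl; ring).
  assert (Ei : forall k, Im (zterm (fun n => Cmult a (x n)) k) =
                         fst a * Im (zterm x k) + snd a * Re (zterm x k))
    by (intros; unfold zterm; simpl; ring).
  destruct (Series_lin2 (fst a) (- snd a) _ _ Xr Xi) as [Er' Sr].
  destruct (Series_lin2 (fst a) (snd a) _ _ Xi Xr) as [Ei' Si].
  split; [split|].
  - eapply ex_series_ext; [intros; symmetry; apply Er | exact Er'].
  - eapply ex_series_ext; [intros; symmetry; apply Ei | exact Ei'].
  - unfold zsum. rewrite (Series_ext _ _ Er), (Series_ext _ _ Ei), Sr, Si.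
    unfold Cmult; simpl. f_equal; ring.
Qed.

Lemma zsum_lin a b x y : zsummable x -> zsummable y ->
  zsum (fun n => Cplus (Cmult a (x n)) (Cmult b (y n))) = Cplus (Cmult a (zsum x)) (Cmult b (zsum y)).
Proof.
  intros Hx Hy. destruct (zsum_scal a x Hx) as [Hax Sax]. destruct (zsum_scal b y Hy) as [Hby Sby].
  rewrite <- Sax, <- Sby. apply (zsum_plus _ _ Hax Hby).
Qed.

Lemma zsum_vanish a : (forall n, a n = RtoC 0) -> zsum a = RtoC 0.
Proof.
  intros Ha. unfold zsum.
  rewrite (Series_ext _ (fun _ => 0)), (Series_ext (fun k => Im (zterm a k)) (fun _ => 0)), Series_const0;
    [reflexivity| |]; intros; unfold zterm; rewrite !Ha; simpl; ring.
Qed.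

Lemma zsum_nonneg_support a : (forall n, (n < 0)%Z -> a n = RtoC 0) ->
  zsum a = (Series (fun k => Re (a (Z.of_nat k))), Series (fun k => Im (a (Z.of_nat k)))).
Proof.
  intros Ha. unfold zsum.
  f_equal; apply Series_ext; intros; unfold zterm; rewrite (Ha (- Z.of_nat n - 1)%Z) by lia;
    unfold Re, Im, Cplus; simpl; ring.
Qed.

Lemma zsum_shift a b : (forall n, (n < 0)%Z -> a n = RtoC 0) ->
  (forall n, (n <= 0)%Z -> b n = RtoC 0) ->
  (forall k, b (Z.of_nat (S k)) = a (Z.of_nat k)) -> zsum b = zsum a.
Proof.
  intros Ha Hb Hba.
  rewrite (zsum_nonneg_support a), (zsum_nonneg_support b) by (auto; intros; apply Hb; lia).
  f_equal; rewrite Series_incr_1_aux by (simpl; rewrite Hb by lia; reflexivity);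
    apply Series_ext; intros; rewrite Hba; reflexivity.
Qed.

Definition sqterm (d : nat) (f : seqv) (k : nat) : R :=
  sqn d f (Z.of_nat k) + sqn d f (- Z.of_nat k - 1)%Z.

Lemma sqn_ge0 d f n : 0 <= sqn d f n.
Proof. apply fsumR_ge0. intros; apply pow2_ge_0. Qed.

Lemma sqn_vanish d f n : (forall j, f n j = RtoC 0) -> sqn d f n = 0.
Proof.
  intros Hf. rewrite <- (fsumR_const0 d). apply fsumR_ext.
  intros j _. rewrite Hf, Cmod_0. ring.
Qed.

Lemma Cmod_lin_sqr a b x y :
  Cmod (Cplus (Cmult a x) (Cmult b y)) ^ 2 <=
  2 * (Cmod a ^ 2 + Cmod b ^ 2) * (Cmod x ^ 2 + Cmod y ^ 2).
Proof.
  pose proof (Cmod_triangle (Cmult a x) (Cmult b y)) as Htri. rewrite !Cmod_mult in Htri.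
  pose proof (Cmod_ge_0 a); pose proof (Cmod_ge_0 b); pose proof (Cmod_ge_0 x);
    pose proof (Cmod_ge_0 y); pose proof (Cmod_ge_0 (Cplus (Cmult a x) (Cmult b y))).
  assert (Cmod (Cplus (Cmult a x) (Cmult b y)) ^ 2 <= (Cmod a * Cmod x + Cmod b * Cmod y) ^ 2)
    by (apply pow_incr; lra).
  nra.
Qed.

Lemma L2_dominated d f g h K : (forall n j, (d <= j)%nat -> h n j = RtoC 0) ->
  (forall n j, Cmod (h n j) ^ 2 <= K * (Cmod (f n j) ^ 2 + Cmod (g n j) ^ 2)) ->
  L2 d f -> L2 d g -> L2 d h.
Proof.
  intros Hpad Hdom [_ Hf] [_ Hg]. split; [exact Hpad|].
  apply ex_series_ge0_le with (fun k => K * (sqterm d f k + sqterm d g k)).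
  - assert (Hn : forall n, sqn d h n <= K * (sqn d f n + sqn d g n)).
    { intros n. unfold sqn. rewrite <- fsumR_plus, <- fsumR_scal. apply fsumR_le; auto. }
    intros k. unfold sqterm. pose proof (sqn_ge0 d h (Z.of_nat k)).
    pose proof (sqn_ge0 d h (- Z.of_nat k - 1)%Z).
    pose proof (Hn (Z.of_nat k)); pose proof (Hn (- Z.of_nat k - 1)%Z). lra.
  - apply (ex_series_scal_l K (fun k => sqterm d f k + sqterm d g k)).
    apply (ex_series_plus _ _ Hf Hg).
Qed.

Lemma L2_zero d : L2 d vzero.
Proof.
  split; [intros; reflexivity|]. apply (ex_series_ext (fun _ => 0)); [|apply ex_series_const0].
  intros. rewrite !sqn_vanish by (intros; reflexivity). simpl. ring.
Qed.

Lemma L2_lin d a b f g : L2 d f -> L2 d g -> L2 d (vlin a f b g).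
Proof.
  intros Hf Hg. apply L2_dominated with f g (2 * (Cmod a ^ 2 + Cmod b ^ 2)); auto.
  - intros n j Hj. unfold vlin. rewrite (proj1 Hf), (proj1 Hg) by exact Hj. ring.
  - intros; apply Cmod_lin_sqr.
Qed.

Lemma H2_subspace d : subspace (H2 d).
Proof.
  split; [split; [apply L2_zero | intros; reflexivity]|].
  intros a b f g [Hf Hf'] [Hg Hg']. split; [apply L2_lin; auto|].
  intros n j Hn. unfold vlin. rewrite Hf', Hg' by exact Hn. ring.
Qed.

Lemma Pm_L2 d f : L2 d f -> L2 d (Pm f).
Proof.
  intros Hf. apply L2_dominated with f f 1; auto.
  - intros n j Hj. unfold Pm. destruct (n <? 0)%Z; [apply Hf, Hj | reflexivity].
  - intros n j. pose proof (pow2_ge_0 (Cmod (f n j))). unfold Pm.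
    destruct (n <? 0)%Z; [|rewrite Cmod_0]; lra.
Qed.

(** * The Hankel operator and the inner product *)

Lemma Pm_vlin a b f h : Pm (vlin a f b h) = vlin a (Pm f) b (Pm h).
Proof. extensionality n; extensionality j. unfold Pm, vlin. destruct (n <? 0)%Z; [reflexivity|ring]. Qed.

Lemma Vm_vlin a b x y : Vm (vlin a x b y) = vlin a (Vm x) b (Vm y).
Proof. apply Pm_vlin. Qed.

Section Hankel.
Variables (q p : nat) (g : msym).
Hypothesis hG : Linf q p g.

Lemma Gmul_vlin a b f h : L2 p f -> L2 p h ->
  Gmul p g (vlin a f b h) = vlin a (Gmul p g f) b (Gmul p g h).
Proof.
  intros Hf Hh. destruct hG as [_ [M HM]]. extensionality m; extensionality i.
  unfold Gmul, vlin. rewrite <- zsum_lin by (apply HM; assumption). f_equal.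
  extensionality n. unfold Gterm, vlin. rewrite <- fsumC_lin. apply fsumC_ext. intros; ring.
Qed.

Lemma Hank_vlin a b f h : L2 p f -> L2 p h ->
  Hank p g (vlin a f b h) = vlin a (Hank p g f) b (Hank p g h).
Proof. intros Hf Hh. unfold Hank. rewrite Gmul_vlin by assumption. apply Pm_vlin. Qed.

Lemma Hank_zero : Hank p g vzero = vzero.
Proof.
  extensionality n; extensionality j. unfold Hank, Pm, Gmul. destruct (n <? 0)%Z; [|reflexivity].
  apply zsum_vanish. intros. unfold Gterm, vzero. apply fsumC_zero. intros; ring.
Qed.

Lemma Hank_L2 f : L2 p f -> L2 q (Hank p g f).
Proof. intros Hf. destruct hG as [_ [M HM]]. apply Pm_L2, (HM f Hf). Qed.

End Hankel.

Lemma Hank_Sh p g f : H2 p f -> Vm (Hank p g f) = Hank p g (Sh f).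
Proof.
  intros [_ Hf]. extensionality n; extensionality i. unfold Vm, Hank, Pm, Vmul.
  destruct (Z.ltb_spec n 0) as [Hn|]; [|reflexivity].
  replace (n - 1 <? 0)%Z with true by (symmetry; apply Z.ltb_lt; lia).
  unfold Gmul. symmetry. apply zsum_shift.
  - intros; unfold Gterm; apply fsumC_zero; intros; rewrite Hf by assumption; ring.
  - intros; unfold Gterm; apply fsumC_zero; intros; unfold Sh, Vmul; rewrite Hf by lia; ring.
  - intros k. unfold Gterm, Sh, Vmul. apply fsumC_ext. intros.
    replace (Z.of_nat (S k) - 1)%Z with (Z.of_nat k) by lia.
    replace (n - Z.of_nat (S k))%Z with (n - 1 - Z.of_nat k)%Z by lia. reflexivity.
Qed.

Lemma H2_Sh d f : H2 d f -> H2 d (Sh f).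
Proof.
  intros [[Hpad Hf] Hneg]. unfold Sh, Vmul.
  split; [split; [intros; apply Hpad; assumption|] | intros; apply Hneg; lia].
  apply ex_series_incr_1. apply (ex_series_ext (sqterm d f)); [|exact Hf].
  intros k. unfold sqterm.
  rewrite (sqn_vanish d f (- Z.of_nat k - 1)%Z) by (intros; apply Hneg; lia).
  rewrite (sqn_vanish d _ (- Z.of_nat (S k) - 1)%Z) by (intros; apply Hneg; lia).
  unfold sqn. replace (Z.of_nat (S k) - 1)%Z with (Z.of_nat k) by lia. reflexivity.
Qed.

Lemma zsummable_dominated a B :
  (forall n, Rabs (Re (a n)) <= B n /\ Rabs (Im (a n)) <= B n) ->
  ex_series (fun k => B (Z.of_nat k) + B (- Z.of_nat k - 1)%Z) -> zsummable a.
Proof.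
  intros HB HBs.
  assert (Hk : forall k,
    Rabs (Re (zterm a k)) <= B (Z.of_nat k) + B (- Z.of_nat k - 1)%Z /\
    Rabs (Im (zterm a k)) <= B (Z.of_nat k) + B (- Z.of_nat k - 1)%Z).
  { intros k. destruct (HB (Z.of_nat k)), (HB (- Z.of_nat k - 1)%Z). unfold zterm, Re, Im in *.
    simpl. split; (eapply Rle_trans; [apply Rabs_triang|lra]). }
  split; apply ex_series_Rabs; (eapply ex_series_ge0_le; [|exact HBs]);
    intros k; split; try apply Rabs_pos; apply Hk.
Qed.

Lemma Cmod_mult_conj_le x y : Cmod (Cmult x (Cconj y)) <= Cmod x ^ 2 + Cmod y ^ 2.
Proof.
  rewrite Cmod_mult, Cmod_conj. pose proof (pow2_ge_0 (Cmod x - Cmod y)).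
  pose proof (Cmod_ge_0 x); pose proof (Cmod_ge_0 y). nra.
Qed.

Lemma ip_summable d f h : L2 d f -> L2 d h ->
  zsummable (fun n => fsumC d (fun j => Cmult (f n j) (Cconj (h n j)))).
Proof.
  intros [_ Hf] [_ Hh]. apply zsummable_dominated with (fun n => sqn d f n + sqn d h n).
  - intros n. rewrite Re_fsumC, Im_fsumC. unfold sqn. rewrite <- fsumR_plus.
    split; (eapply Rle_trans; [apply fsumR_abs|]); apply fsumR_le; intros j _;
      (eapply Rle_trans; [|apply Cmod_mult_conj_le]).
    + apply re_le_Cmod.
    + eapply Rle_trans; [apply Rmax_r|apply Rmax_Cmod].
  - apply (ex_series_ext (fun k => sqterm d f k + sqterm d h k)
      (fun k => sqn d f (Z.of_nat k) + sqn d h (Z.of_nat k) +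
                (sqn d f (- Z.of_nat k - 1)%Z + sqn d h (- Z.of_nat k - 1)%Z))).
    + intros k. unfold sqterm. simpl. ring.
    + apply (ex_series_plus _ _ Hf Hh).
Qed.

Lemma ip_vlin_l d a b f g h : L2 d f -> L2 d g -> L2 d h ->
  ip d (vlin a f b g) h = Cplus (Cmult a (ip d f h)) (Cmult b (ip d g h)).
Proof.
  intros Hf Hg Hh. unfold ip. rewrite <- zsum_lin by (apply ip_summable; assumption).
  f_equal. extensionality n. unfold vlin. rewrite <- fsumC_lin. apply fsumC_ext. intros; ring.
Qed.

Lemma ip_zero_l d h : ip d vzero h = RtoC 0.
Proof. apply zsum_vanish. intros; apply fsumC_zero. intros; unfold vzero; ring. Qed.

Lemma ip_self_eq0 d w : L2 d w -> ip d w w = RtoC 0 -> w = vzero.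
Proof.
  intros [Hpad Hw] H0.
  assert (Hre : forall n, Re (fsumC d (fun j => Cmult (w n j) (Cconj (w n j)))) = sqn d w n).
  { intros n. rewrite Re_fsumC. apply fsumR_ext. intros j _. rewrite <- Cmod2_conj. reflexivity. }
  assert (Hsum : Series (sqterm d w) = 0).
  { apply (f_equal fst) in H0. unfold ip, zsum in H0. simpl in H0. rewrite <- H0.
    apply Series_ext. intros k. unfold zterm, sqterm. rewrite <- !Hre. reflexivity. }
  assert (Hterm := Series_ge0_eq0 _ Hw (fun k => Rplus_le_le_0_compat _ _ (sqn_ge0 _ _ _) (sqn_ge0 _ _ _)) Hsum).
  assert (Hn : forall n, sqn d w n = 0).
  { intros n. pose proof (sqn_ge0 d w n).
    destruct (Z_lt_le_dec n 0).
    - specialize (Hterm (Z.to_nat (- n - 1))). unfold sqterm in Hterm.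
      rewrite Z2Nat.id in Hterm by lia. replace (- (- n - 1) - 1)%Z with n in Hterm by lia.
      pose proof (sqn_ge0 d w (- n - 1)%Z). lra.
    - specialize (Hterm (Z.to_nat n)). unfold sqterm in Hterm. rewrite Z2Nat.id in Hterm by lia.
      pose proof (sqn_ge0 d w (- n - 1)%Z). lra. }
  extensionality n; extensionality j. destruct (le_lt_dec d j) as [Hj|Hj]; [apply Hpad, Hj|].
  assert (Cmod (w n j) ^ 2 = 0).
  { apply (fsumR_eq0 d (fun j => Cmod (w n j) ^ 2)); [intros; apply pow2_ge_0 | apply Hn | exact Hj]. }
  apply Cmod_eq_0. nra.
Qed.

Lemma ip_Sh_Sadj d f h : H2 d f -> ip d (Sh f) h = ip d f (Sadj h).
Proof.
  intros [_ Hf]. unfold ip. apply zsum_shift.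
  - intros; apply fsumC_zero; intros; rewrite Hf by assumption; ring.
  - intros; apply fsumC_zero; intros; unfold Sh, Vmul; rewrite Hf by lia; ring.
  - intros k. apply fsumC_ext. intros. unfold Sh, Vmul, Sadj.
    replace (Z.of_nat (S k) - 1)%Z with (Z.of_nat k) by lia.
    replace (Z.of_nat k <? 0)%Z with false by (symmetry; apply Z.ltb_ge; lia).
    replace (Z.of_nat k + 1)%Z with (Z.of_nat (S k)) by lia. reflexivity.
Qed.

(** * Finite-dimensional linear algebra *)

(* Gaussian elimination of the last unknown. *)
Lemma homogeneous_system_nontrivial n : forall eqs : list (nat -> C), (length eqs < n)%nat ->
  exists a : nat -> C, (exists i, (i < n)%nat /\ a i <> RtoC 0) /\
    forall e, In e eqs -> fsumC n (fun i => Cmult (a i) (e i)) = RtoC 0.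
Proof.
  induction n as [|n IH]; intros eqs Hlen; [lia|].
  destruct (classic (exists k, In k eqs /\ k n <> RtoC 0)) as [[k [Hk Hkn]] | Hnone].
  - destruct (in_split k eqs Hk) as [l1 [l2 ->]].
    set (reduce := fun (e : nat -> C) i => Cminus (e i) (Cmult (Cmult (e n) (Cinv (k n))) (k i))).
    destruct (IH (map reduce (l1 ++ l2))) as [a [[i0 [Hi0 Hai0]] Ha]].
    { rewrite length_map, length_app. rewrite length_app in Hlen. simpl in Hlen. lia. }
    set (Sk := fsumC n (fun i => Cmult (a i) (k i))).
    assert (Hred : forall e, In e (l1 ++ l2) ->
      fsumC n (fun i => Cmult (a i) (e i)) = Cmult (Cmult (e n) (Cinv (k n))) Sk).
    { intros e He. pose proof (Ha _ (in_map reduce _ _ He)) as Hre. unfold reduce in Hre.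
      rewrite (fsumC_ext n _ (fun i => Cplus (Cmult (RtoC 1) (Cmult (a i) (e i)))
        (Cmult (Copp (Cmult (e n) (Cinv (k n)))) (Cmult (a i) (k i))))) in Hre by (intros; ring).
      rewrite fsumC_lin in Hre. fold Sk in Hre.
      set (Se := fsumC n (fun i => Cmult (a i) (e i))) in *.
      replace Se with (Cplus (Cplus (Cmult (RtoC 1) Se) (Cmult (Copp (Cmult (e n) (Cinv (k n)))) Sk))
                             (Cmult (Cmult (e n) (Cinv (k n))) Sk)) by ring.
      rewrite Hre. ring. }
    assert (Hrow : forall e, In e (l1 ++ k :: l2) ->
      fsumC n (fun i => Cmult (a i) (e i)) = Cmult (Cmult (e n) (Cinv (k n))) Sk).
    { intros e He. destruct (in_app_or _ _ _ He) as [He' | [<- | He']].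
      - apply Hred, in_or_app; auto.
      - fold Sk. field. exact Hkn.
      - apply Hred, in_or_app; auto. }
    exists (fun i => if (i <? n)%nat then a i else Cmult (Copp Sk) (Cinv (k n))). split.
    + exists i0. split; [lia|]. replace (i0 <? n)%nat with true by (symmetry; apply Nat.ltb_lt; lia).
      exact Hai0.
    + intros e He. cbn [fsumC]. rewrite Nat.ltb_irrefl.
      rewrite (fsumC_ext n _ (fun i => Cmult (a i) (e i)))
        by (intros i Hi; replace (i <? n)%nat with true by (symmetry; apply Nat.ltb_lt; lia); reflexivity).
      rewrite Hrow by exact He. field. exact Hkn.
  - exists (fun i => if (i =? n)%nat then RtoC 1 else RtoC 0). split.
    + exists n. split; [lia|]. rewrite Nat.eqb_refl. intros H. injection H. lra.
    + intros e He. cbn [fsumC]. rewrite Nat.eqb_refl, fsumC_zero.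
      * replace (e n) with (RtoC 0) by (apply NNPP; intros Hen; apply Hnone; eauto). ring.
      * intros i Hi. replace (i =? n)%nat with false by (symmetry; apply Nat.eqb_neq; lia). ring.
Qed.

Lemma lincomb_dependent m (b v : nat -> seqv) :
  (forall i, (i <= m)%nat -> exists c, v i = lincomb m c b) ->
  exists a, (exists i, (i <= m)%nat /\ a i <> RtoC 0) /\ lincomb (S m) a v = vzero.
Proof.
  intros Hv.
  destruct (functional_choice (fun i (c : nat -> C) => (i <= m)%nat -> v i = lincomb m c b))
    as [coef Hcoef].
  { intros i. destruct (le_lt_dec i m) as [Hi|Hi].
    - destruct (Hv i Hi) as [c Hc]. exists c. auto.
    - exists (fun _ => RtoC 0). intros; lia. }
  destruct (homogeneous_system_nontrivial (S m) (map (fun k i => coef i k) (seq 0 m)))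
    as [a [[i [Hi Hai]] Ha]].
  { rewrite length_map, length_seq. lia. }
  exists a. split; [exists i; split; [lia | exact Hai]|].
  extensionality n; extensionality j. rewrite lincombE.
  rewrite (fsumC_ext (S m) _ (fun i => fsumC m (fun k => Cmult (a i) (Cmult (coef i k) (b k n j)))))
    by (intros i' Hi'; rewrite Hcoef, lincombE, fsumC_scal by lia; reflexivity).
  rewrite fsumC_swap. apply fsumC_zero. intros k Hk.
  rewrite (fsumC_ext (S m) _ (fun i => Cmult (b k n j) (Cmult (a i) (coef i k)))) by (intros; ring).
  rewrite fsumC_scal, Ha; [unfold vzero; ring|].
  apply in_map_iff. exists k. split; [reflexivity | apply in_seq; lia].
Qed.

Section InjectiveEndomorphism.
Variables (Y : seqv -> Prop) (U : seqv -> seqv).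
Hypothesis HY : subspace Y.
Hypothesis HU : forall a b x y, U (vlin a x b y) = vlin a (U x) b (U y).
Hypothesis HUY : forall x, Y x -> Y (U x).
Hypothesis HUinj : forall x, Y x -> U x = vzero -> x = vzero.

Lemma linear_vzero : U vzero = vzero.
Proof.
  replace vzero with (vlin (RtoC 0) vzero (RtoC 0) vzero) at 1
    by (extensionality n; extensionality j; unfold vlin, vzero; ring).
  rewrite HU. extensionality n; extensionality j. unfold vlin, vzero. ring.
Qed.

Lemma linear_vscal c x : U (vscal c x) = vscal c (U x).
Proof. rewrite !vscal_vlin. apply HU. Qed.

Lemma linear_lincomb n c w : U (lincomb n c w) = lincomb n c (fun i => U (w i)).
Proof.
  induction n as [|n IH]; simpl; [apply linear_vzero|].
  rewrite !vadd_vlin, HU, IH, linear_vscal. reflexivity.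
Qed.

Lemma iter_invariant i y : Y y -> Y (Nat.iter i U y).
Proof. intros Hy; induction i as [|i IH]; simpl; auto. Qed.

(* If [sum_i a_i U^i y = 0] with some [a_i <> 0], strip the vanishing leading
   coefficients using injectivity; then [a_0 y = - U (sum_i a_(i+1) U^i y)]. *)
Lemma orbit_relation_preimage n : forall a y, Y y ->
  (exists i, (i < n)%nat /\ a i <> RtoC 0) ->
  lincomb n a (fun i => Nat.iter i U y) = vzero -> exists x, Y x /\ U x = y.
Proof.
  induction n as [|n IH]; intros a y Hy [i [Hi Hai]] Hrel; [lia|].
  rewrite lincomb_first in Hrel. simpl in Hrel.
  set (z := lincomb n (fun i => a (S i)) (fun i => Nat.iter i U y)) in *.
  rewrite <- linear_lincomb in Hrel. fold z in Hrel.
  assert (Hz : Y z) by (apply subspace_lincomb; auto; intros; apply iter_invariant; exact Hy).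
  assert (HUz : U z = vscal (Copp (a 0%nat)) y).
  { extensionality n'; extensionality j. apply (f_equal (fun v => v n' j)) in Hrel.
    unfold vadd, vscal, vzero in *.
    replace (U z n' j) with (Cminus (Cplus (Cmult (a 0%nat) (y n' j)) (U z n' j))
                                    (Cmult (a 0%nat) (y n' j))) by ring.
    rewrite Hrel. ring. }
  destruct (classic (a 0%nat = RtoC 0)) as [Ha0 | Ha0].
  - apply (IH (fun i => a (S i)) y Hy).
    + destruct i as [|i]; [contradiction|]. exists i. split; [lia | exact Hai].
    + fold z. apply HUinj; [exact Hz|]. rewrite HUz, Ha0.
      extensionality n'; extensionality j. unfold vscal, vzero. ring.
  - exists (vscal (Copp (Cinv (a 0%nat))) z). split.
    + rewrite vscal_vlin. apply (proj2 HY); exact Hz.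
    + rewrite linear_vscal, HUz. extensionality n'; extensionality j. unfold vscal.
      field. exact Ha0.
Qed.

Lemma injective_endomorphism_surjective m b :
  (forall y, Y y -> exists c, y = lincomb m c b) -> forall y, Y y -> exists x, Y x /\ U x = y.
Proof.
  intros Hspan y Hy.
  destruct (lincomb_dependent m b (fun i => Nat.iter i U y)) as [a [[i [Hi Hai]] Hrel]].
  { intros i _. apply Hspan, iter_invariant, Hy. }
  apply (orbit_relation_preimage (S m) a y Hy); [exists i; split; [lia|] |]; assumption.
Qed.

End InjectiveEndomorphism.

Lemma Lub_Rbar_subset (E1 E2 : R -> Prop) :
  (forall r, E1 r -> E2 r) -> Rbar_le (Lub_Rbar E1) (Lub_Rbar E2).
Proof.
  intros H12. destruct (Lub_Rbar_correct E1) as [_ Hlub]. apply Hlub.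
  intros r Hr. destruct (Lub_Rbar_correct E2) as [Hub _]. apply Hub, H12, Hr.
Qed.

Section InvariantSubspaceSpectrum.
Variables (d m : nat) (X Y : seqv -> Prop) (T : seqv -> seqv) (b : nat -> seqv).
Hypothesis HY : subspace Y.
Hypothesis HYX : forall y, Y y -> X y.
Hypothesis HT : forall a1 a2 x y, T (vlin a1 x a2 y) = vlin a1 (T x) a2 (T y).
Hypothesis HTY : forall y, Y y -> Y (T y).
Hypothesis HYfin : forall y, Y y -> exists c, y = lincomb m c b.

Lemma resolvent_invariant_subspace l : resolvent d X T l -> resolvent d Y T l.
Proof.
  intros [Rl [Hsol [Hleft [M HM]]]].
  set (U := fun x => vsub (T x) (vscal l x)).
  assert (HU : forall a1 a2 x y, U (vlin a1 x a2 y) = vlin a1 (U x) a2 (U y)).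
  { intros. unfold U. rewrite HT. extensionality n; extensionality j.
    unfold vsub, vscal, vlin. ring. }
  assert (HUY : forall y, Y y -> Y (U y)).
  { intros y Hy. unfold U. rewrite vsub_vlin, vscal_vlin.
    apply (proj2 HY); [apply HTY | apply (proj2 HY)]; exact Hy. }
  assert (HUinj : forall x, Y x -> U x = vzero -> x = vzero).
  { intros x Hx Hx0. transitivity (Rl (U x)); [symmetry; apply Hleft, HYX, Hx|].
    rewrite Hx0, <- (linear_vzero U HU) at 1. apply Hleft, HYX, HY. }
  exists Rl. split; [|split].
  - intros y Hy. split; [|apply Hsol, HYX, Hy].
    destruct (injective_endomorphism_surjective Y U HY HU HUY HUinj m b HYfin y Hy) as [x [Hx <-]].
    enough (Rl (U x) = x) as -> by exact Hx. apply Hleft, HYX, Hx.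
  - intros x Hx. apply Hleft, HYX, Hx.
  - exists M. intros y Hy. apply HM, HYX, Hy.
Qed.

Lemma rspec_invariant_subspace_le : Rbar_le (rspec d Y T) (rspec d X T).
Proof.
  apply Lub_Rbar_subset. intros r [l [Hl ->]]. exists l. split; [|reflexivity].
  intros Hres. apply Hl, resolvent_invariant_subspace, Hres.
Qed.

End InvariantSubspaceSpectrum.

(** * Ranges of the Hankel operator *)

Definition Hrange (p : nat) (g : msym) (F : seqv -> Prop) (x : seqv) : Prop :=
  exists f, F f /\ x = Hank p g f.

Definition perpH2 (p : nat) (M : seqv -> Prop) (f : seqv) : Prop :=
  H2 p f /\ forall h, M h -> ip p f h = RtoC 0.

Lemma fin_dim_subspace_H2 p M : fin_dim_subspace p M -> forall h, M h -> H2 p h.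
Proof.
  intros [m [b [Hb HM]]] h Hh. apply HM in Hh as [c ->].
  apply subspace_lincomb; [apply H2_subspace | exact Hb].
Qed.

Lemma perpH2_subspace p M : (forall h, M h -> L2 p h) -> subspace (perpH2 p M).
Proof.
  intros HM. split.
  - split; [apply H2_subspace | intros; apply ip_zero_l].
  - intros a b f g [Hf Of] [Hg Og]. split; [apply H2_subspace; assumption|].
    intros h Hh. rewrite ip_vlin_l by (apply Hf || apply Hg || apply HM; assumption).
    rewrite Of, Og by assumption. ring.
Qed.

Lemma perpH2_Sh p M : (forall h, M h -> M (Sadj h)) ->
  forall f, perpH2 p M f -> perpH2 p M (Sh f).
Proof.
  intros HM f [Hf Of]. split; [apply H2_Sh, Hf|].
  intros h Hh. rewrite ip_Sh_Sadj by exact Hf. apply Of, HM, Hh.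
Qed.

Lemma orth_proj_residual_perp p M P f : is_orth_proj p (H2 p) M P ->
  (forall h, M h -> H2 p h) -> H2 p f -> perpH2 p M (vsub f (P f)).
Proof.
  intros HP HM Hf. destruct (HP f Hf) as [HPf Horth]. split; [|exact Horth].
  rewrite vsub_vlin. apply H2_subspace; [exact Hf | apply HM, HPf].
Qed.

Lemma Hrange_subspace q p g F : Linf q p g -> subspace F -> (forall f, F f -> L2 p f) ->
  subspace (Hrange p g F).
Proof.
  intros hG [F0 Flin] HF. split.
  - exists vzero. split; [exact F0 | symmetry; apply Hank_zero].
  - intros a b x y [f [Hf ->]] [h [Hh ->]]. exists (vlin a f b h). split; [apply Flin; assumption|].
    symmetry. apply (Hank_vlin q); auto.
Qed.

Lemma Hrange_Vm p g F : (forall f, F f -> H2 p f) -> (forall f, F f -> F (Sh f)) ->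
  forall x, Hrange p g F x -> Hrange p g F (Vm x).
Proof.
  intros HF HSF x [f [Hf ->]]. exists (Sh f). split; [apply HSF, Hf | apply Hank_Sh, HF, Hf].
Qed.

Lemma Hrange_L2 q p g F : Linf q p g -> (forall f, F f -> L2 p f) ->
  forall x, Hrange p g F x -> L2 q x.
Proof. intros hG HF x [f [Hf ->]]. apply (Hank_L2 q p g hG), HF, Hf. Qed.

Lemma orth_proj_fixes d U Y Pi : is_orth_proj d U Y Pi -> subspace Y ->
  (forall y, Y y -> U y) -> (forall y, Y y -> L2 d y) -> forall y, Y y -> Pi y = y.
Proof.
  intros HPi HY HYU HYL2 y Hy. destruct (HPi y (HYU y Hy)) as [HPiy Horth].
  assert (Hres : Y (vsub y (Pi y))) by (rewrite vsub_vlin; apply (proj2 HY); assumption).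
  symmetry. apply vsub_eq0, (ip_self_eq0 d); [apply HYL2, Hres | apply Horth, Hres].
Qed.

Theorem lemma6p1 (q p : nat) (g : msym)
  (hG : Linf q p g)
  (C1 : finite_rank p g)
  (C2a : forall h, maximizing q p g h -> ~ (exists f, H2 p f /\ h = Sh f))
  (C2b : span_dim (maximizing q p g) p)
  (M0 : seqv -> Prop) (hM0 : fin_dim_subspace p M0)
  (hSM0 : forall f, M0 f -> M0 (Sadj f))
  (P0 : seqv -> seqv) (hP0 : is_orth_proj p (H2 p) M0 P0)
  (Pi : seqv -> seqv) :
  let X := fun x => exists f, H2 p f /\ x = Hank p g f in
  let M0perp := fun f => H2 p f /\ forall h, M0 h -> ip p f h = RtoC 0 in
  let X0 := fun x => exists f, M0perp f /\ x = Hank p g f in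
  is_orth_proj q X X0 Pi ->
  (forall x, X0 x -> X0 (Vm x)) /\
  Rbar_le (rspec q X0 Vm) (rspec q X Vm) /\
  (forall (k : nat) f, H2 p f ->
     Nat.iter k Vm (Hank p g (vsub f (P0 f))) =
     Nat.iter k Vm (Pi (Hank p g (vsub f (P0 f))))).
Proof.
  intros X M0perp X0 hPi.
  assert (HM0 := fin_dim_subspace_H2 p M0 hM0).
  assert (Hperp : subspace M0perp) by (apply perpH2_subspace; intros; apply HM0; assumption).
  assert (Hperp_L2 : forall f, M0perp f -> L2 p f) by (intros f Hf; apply Hf).
  pose proof (Hrange_subspace q p g M0perp hG Hperp Hperp_L2) as HX0.
  assert (HX0X : forall x, X0 x -> X x) by (intros x [f [Hf ->]]; exists f; split; [apply Hf | reflexivity]).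
  assert (Hinv : forall x, X0 x -> X0 (Vm x)).
  { apply Hrange_Vm; [intros f Hf; apply Hf | apply perpH2_Sh, hSM0]. }
  split; [exact Hinv|]. split.
  - destruct C1 as [m [b Hb]].
    apply (rspec_invariant_subspace_le q m X X0 Vm b HX0 HX0X Vm_vlin Hinv).
    intros y Hy. destruct (HX0X y Hy) as [f [Hf ->]]. apply Hb, Hf.
  - intros k f Hf. rewrite (orth_proj_fixes q X X0 Pi hPi HX0 HX0X); [reflexivity| |].
    + apply (Hrange_L2 q p g M0perp hG Hperp_L2).
    + exists (vsub f (P0 f)). split; [apply orth_proj_residual_perp; assumption | reflexivity].
Qed.
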